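(* Let $\mathcal H$ be a finite index set, let $n$ and $k$ be integers, and for each $j\in\mathcal H$ let $\mathcal X_j\subseteq\mathbb R^m$ be closed and convex, with $\bigcap_{j\in\mathcal H}\mathcal X_j=\{x^*\}$. Suppose $\mathcal H$ is $k$-redundant. Suppose $\mu>0$ is such that for every $x\in\mathbb R^m$ and every $\mathcal S\subseteq\mathcal H$ with $|\mathcal S|\ge n-k$, $$\max_{i\in\mathcal S}\mathrm{dist}(x,\mathcal X_i)\ge\mu\,\mathrm{dist}\Big(x,\bigcap_{i\in\mathcal S}\mathcal X_i\Big).$$ Let $x_j\in\mathcal X_j$ be arbitrary for each $j\in\mathcal H$, and let $\mathcal S\subseteq\mathcal H$ with $|\mathcal S|\ge n-k$. Then $0<\mu\le 1$, and for every $i\in\mathcal H$, $$\max_{j\in\mathcal S}\|x_i-x_j\|^2\ge\mu^2\|x_i-x^*\|^2.$$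
   Context: $\mathrm{dist}(x,\mathcal C)=\|x-\mathrm P_{\mathcal C}[x]\|$, where $\mathrm P_{\mathcal C}$ is the Euclidean projection onto a closed convex set $\mathcal C$. $\mathcal H$ is $k$-redundant if for every $\mathcal S\subseteq\mathcal H$ with $|\mathcal S|\ge n-k$ we have $\bigcap_{i\in\mathcal S}\mathcal X_i=\bigcap_{i\in\mathcal H}\mathcal X_i$. (In the paper, $n$ is the total number of agents and $\mathcal H$ is the set of normal agents.) *)

From HB Require Import structures.
From mathcomp Require Import all_boot all_order all_algebra.
From mathcomp Require Import all_classical all_reals all_analysis.
Set Implicit Arguments. Unset Strict Implicit. Unset Printing Implicit Defensive.
Import Order.TTheory GRing.Theory Num.Theory.
Import numFieldNormedType.Exports.
Local Open Scope classical_set_scope.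
Local Open Scope ring_scope.

(* R^m is represented by row vectors 'rV[R]_m,
   equipped with the EUCLIDEAN norm defined below (the library norm on
   matrices is the max norm, so we do not use it for distances). *)

Definition enorm (R : realType) (m : nat) (x : 'rV[R]_m) : R :=
  Num.sqrt (\sum_(i < m) (x ord0 i) ^+ 2).

Definition dist (R : realType) (m : nat) (x : 'rV[R]_m) (C : set 'rV[R]_m) : R :=
  inf [set enorm (x - y) | y in C].

Definition closed_convex (R : realType) (m : nat) (C : set 'rV[R]_m) : Prop :=
  closed C /\ convex_set (C : set (convex_lmodType 'rV[R]_m)).

Definition capS (R : realType) (m : nat) (I : finType) (X : I -> set 'rV[R]_m)
  (S : {set I}) : set 'rV[R]_m :=
  \bigcap_(i in [set i | i \in S]) X i.

Definition k_redundant (R : realType) (m : nat) (I : finType)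
  (X : I -> set 'rV[R]_m) (n k : int) : Prop :=
  forall S : {set I}, n - k <= (#|S|%:Z) -> capS X S = capS X [set: I]%SET.

(* maximum over a finite subset of nonnegative quantities *)
Definition maxS (R : realType) (I : finType) (S : {set I}) (f : I -> R) : R :=
  \big[Num.max/0]_(i in S) f i.

From HB Require Import structures.
From mathcomp Require Import all_boot all_order all_algebra.
From mathcomp Require Import all_classical all_reals all_analysis.
Import Order.TTheory GRing.Theory Num.Theory.
Import numFieldNormedType.Exports.
Local Open Scope classical_set_scope.
Local Open Scope ring_scope.

(* By redundancy every S with |S| >= n - k has intersection {x*}, so the
   regularity hypothesis reads mu ||z - x*|| <= max_(j in S) dist(z, X_j).
   Since x* lies in every X_j, the right-hand side is at most ||z - x*||,
   whence mu <= 1 by taking any z != x*.  Taking z = x_i and bounding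
   dist(x_i, X_j) by ||x_i - x_j|| gives the second claim after squaring. *)

Section MaxS.
Variables (R : realType) (I : finType) (S : {set I}).

Lemma maxS_ge0 (f : I -> R) : 0 <= maxS S f.
Proof. by rewrite /maxS; elim/big_rec: _ => // i y _ y0; rewrite le_max y0 orbT. Qed.

Lemma le_maxS (f : I -> R) j : j \in S -> f j <= maxS S f.
Proof. by move=> jS; rewrite /maxS (bigD1 j) //= le_max lexx. Qed.

Lemma maxS_le (f : I -> R) M :
  0 <= M -> (forall j, j \in S -> f j <= M) -> maxS S f <= M.
Proof.
by move=> M0 fM; rewrite /maxS; elim/big_rec: _ => // i y iS yM; rewrite ge_max yM fM.
Qed.

Lemma le_maxS2 (f g : I -> R) :
  (forall j, j \in S -> f j <= g j) -> maxS S f <= maxS S g.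
Proof.
move=> fg; apply: maxS_le (maxS_ge0 g) _ => j jS.
exact: le_trans (fg j jS) (le_maxS g j jS).
Qed.

Lemma maxS_sqr (f : I -> R) :
  (forall j, 0 <= f j) -> maxS S (fun j => f j ^+ 2) = maxS S f ^+ 2.
Proof.
move=> f0; rewrite /maxS.
pose K (a b : R) := 0 <= b /\ a = b ^+ 2.
suff [] : K (\big[Num.max/0]_(i in S) f i ^+ 2) (\big[Num.max/0]_(i in S) f i) by [].
apply: big_rec2 => [|i a b _ [b0 ->]]; first by split; rewrite ?expr0n.
split; first by rewrite le_max b0 orbT.
by rewrite !maxEle ler_sqr ?nnegrE //; case: ifP.
Qed.

End MaxS.

Section Distance.
Variables (R : realType) (m : nat).
Implicit Types (y z : 'rV[R]_m) (C : set 'rV[R]_m).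

Lemma enorm_ge0 (v : 'rV[R]_m) : 0 <= enorm v.
Proof. exact: sqrtr_ge0. Qed.

Lemma enorm_const1 : enorm (const_mx 1 : 'rV[R]_m) = Num.sqrt m%:R.
Proof.
rewrite /enorm; under eq_bigr do rewrite mxE expr1n.
by rewrite sumr_const card_ord.
Qed.

Lemma dist_le z C y : C y -> dist z C <= enorm (z - y).
Proof.
move=> Cy; apply: ge_inf; last by exists y.
by exists 0 => _ [w _ <-]; apply: enorm_ge0.
Qed.

Lemma dist_set1 z y : dist z [set y] = enorm (z - y).
Proof. by rewrite /dist image_set1 inf1. Qed.

End Distance.

Section Regularity.
Context {R : realType} {m : nat} {I : finType} {X : I -> set 'rV[R]_m}.
Context {S : {set I}} {xstar : 'rV[R]_m} {mu : R}.
Hypothesis xstar_in : forall j, j \in S -> X j xstar.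
Hypothesis regular : forall z, mu * enorm (z - xstar) <= maxS S (fun j => dist z (X j)).

Lemma regular_le1 : (0 < m)%N -> mu <= 1.
Proof.
move=> m_gt0; set z := xstar + const_mx 1.
have zE : z - xstar = const_mx 1 by rewrite addrAC subrr add0r.
have nz_gt0 : 0 < enorm (z - xstar) by rewrite zE enorm_const1 sqrtr_gt0 ltr0n.
rewrite -(ler_pM2r nz_gt0) mul1r; apply: le_trans (regular z) _.
apply: maxS_le (ltW nz_gt0) _ => j jS.
exact/dist_le/xstar_in.
Qed.

Lemma regular_sqr_pairwise (x : I -> 'rV[R]_m) i :
  0 <= mu -> (forall j, X j (x j)) ->
  mu ^+ 2 * enorm (x i - xstar) ^+ 2 <= maxS S (fun j => enorm (x i - x j) ^+ 2).
Proof.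
move=> mu0 xX; rewrite maxS_sqr => [|j]; last exact: enorm_ge0.
rewrite -exprMn ler_sqr ?nnegrE ?mulr_ge0 ?enorm_ge0 ?maxS_ge0 //.
apply: le_trans (regular (x i)) _; apply: le_maxS2 => j _.
exact: dist_le.
Qed.

End Regularity.

Theorem lemma1 (R : realType) (m : nat) (I : finType) (n k : int)
  (X : I -> set 'rV[R]_m) (xstar : 'rV[R]_m) (mu : R)
  (hm : (0 < m)%N)
  (hX : forall j, closed_convex (X j))
  (hcap : capS X [set: I]%SET = [set xstar])
  (hred : k_redundant X n k)
  (hmu0 : 0 < mu)
  (hmu : forall (x : 'rV[R]_m) (S : {set I}), n - k <= (#|S|%:Z) ->
     maxS S (fun i => dist x (X i)) >= mu * dist x (capS X S))
  (x : I -> 'rV[R]_m) (hx : forall j, X j (x j))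
  (S : {set I}) (hS : n - k <= (#|S|%:Z)) :
  (0 < mu <= 1) /\
  forall i : I, maxS S (fun j => enorm (x i - x j) ^+ 2) >= mu ^+ 2 * enorm (x i - xstar) ^+ 2.
Proof.
have capE : capS X S = [set xstar] by rewrite hred.
have xstar_in j : X j xstar.
  have : capS X [set: I]%SET xstar by rewrite hcap.
  by apply; rewrite /= inE.
have regular z : mu * enorm (z - xstar) <= maxS S (fun j => dist z (X j)).
  by rewrite -dist_set1 -capE; apply: hmu.
split; first by rewrite hmu0 (regular_le1 (fun j _ => xstar_in j) regular hm).
move=> i; exact: regular_sqr_pairwise regular x i (ltW hmu0) hx.
Qed.
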